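(* Let a nondegenerate triangle with circumcenter $O$ and circumradius $R$ be circumscribed about a central conic with foci $F_+,F_-$, and let $d_\pm=|OF_\pm|$. If $R^2=d_+d_-$, then the conic is a hyperbola.
   Context: A central conic is a non-degenerate ellipse or hyperbola. A triangle is circumscribed about a conic if each of its three sidelines is tangent to the conic. *)

From mathcomp Require Import all_boot all_order all_algebra.
From mathcomp Require Import reals.
Set Implicit Arguments. Unset Strict Implicit. Unset Printing Implicit Defensive.
Import Order.TTheory GRing.Theory Num.Theory.
Local Open Scope ring_scope.

Section Plane.
Variable R : realType.
Definition pt := (R * R)%type.

Definition padd (p q : pt) : pt := (p.1 + q.1, p.2 + q.2).
Definition psub (p q : pt) : pt := (p.1 - q.1, p.2 - q.2).
Definition pscale (t : R) (p : pt) : pt := (t * p.1, t * p.2).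
Definition dot (u v : pt) : R := u.1 * v.1 + u.2 * v.2.
Definition cross (u v : pt) : R := u.1 * v.2 - u.2 * v.1.
Definition dist (p q : pt) : R := Num.sqrt (dot (psub p q) (psub p q)).

(* Central conic with foci F1, F2 and semi-major (resp. semi-transverse)
   axis a: the ellipse  |XF1| + |XF2| = 2a  if 2a > |F1F2| (a circle when
   F1 = F2), the hyperbola  | |XF1| - |XF2| | = 2a  if 0 < 2a < |F1F2|. *)
Definition central_conic (F1 F2 : pt) (a : R) : Prop :=
  0 < a /\ 2 * a != dist F1 F2.

Definition is_ellipse (F1 F2 : pt) (a : R) : Prop :=
  central_conic F1 F2 a /\ dist F1 F2 < 2 * a.

Definition is_hyperbola (F1 F2 : pt) (a : R) : Prop :=
  central_conic F1 F2 a /\ 2 * a < dist F1 F2.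

(* The quadratic equation of that conic: with center M = (F1+F2)/2,
   e = (F1-F2)/2 and u = X - M, the focal locus is
     a^2 |u|^2 - (u.e)^2 - a^2 (a^2 - |e|^2) = 0,
   valid for both the ellipse and the hyperbola (both branches). *)
Definition conic_eq (F1 F2 : pt) (a : R) (X : pt) : R :=
  let M := pscale (1 / 2) (padd F1 F2) in
  let e := pscale (1 / 2) (psub F1 F2) in
  let u := psub X M in
  a ^+ 2 * dot u u - (dot u e) ^+ 2 - a ^+ 2 * (a ^+ 2 - dot e e).

(* The line {P + t V | t} (V <> 0) is tangent to the conic: the conic
   equation restricted to the line is a genuine quadratic in t with a
   double root t0 (the point of tangency P + t0 V). *)
Definition tangent_line (F1 F2 : pt) (a : R) (P V : pt) : Prop :=
  V != (0, 0) /\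
  exists t0 k : R, k != 0 /\
    forall t : R, conic_eq F1 F2 a (padd P (pscale t V)) = k * (t - t0) ^+ 2.

Definition sideline_tangent (F1 F2 : pt) (a : R) (A B : pt) : Prop :=
  tangent_line F1 F2 a A (psub B A).

Definition nondegenerate_triangle (A B C : pt) : Prop :=
  cross (psub B A) (psub C A) != 0.

Definition circumscribed (A B C F1 F2 : pt) (a : R) : Prop :=
  [/\ sideline_tangent F1 F2 a A B, sideline_tangent F1 F2 a B C
    & sideline_tangent F1 F2 a C A].

Definition is_circumcenter (A B C O : pt) : Prop :=
  dist O A = dist O B /\ dist O B = dist O C.

End Plane.

From mathcomp Require Import all_boot all_order all_algebra.
From mathcomp Require Import reals.
From mathcomp Require Import ring lra.
Import Order.TTheory GRing.Theory Num.Theory.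
Local Open Scope ring_scope.
Set Implicit Arguments.
Unset Strict Implicit.

(* If the conic were an ellipse, put it in its focal frame: center 0, foci (c, 0) and
   (-c, 0), equation b x^2 + a^2 y^2 = a^2 b with b = a^2 - c^2 > 0.  For every
   triangle circumscribed about it, with circumradius R and d_+-, the distances from
   the circumcenter to the foci, one has the focal analogue of Euler's R^2 - OI^2 = 2Rr:
     (R^2 - d_+^2) (R^2 - d_-^2) = 4 R^2 b.
   It is checked by computation: the points of tangency get homogeneous rational
   parameters, the vertices are the poles of the chords joining them, and the
   circumcircle is then explicit.  If R^2 = d_+ d_-, the left side equals
   - d_+ d_- (d_+ - d_-)^2 <= 0 < 4 R^2 b, a contradiction. *)

Section Plane.
Variable R : realType.
Implicit Types (a b c h k s w t : R) (n u v A B C O P Q T X Y : pt R).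

Definition dist2 X Y := dot (psub X Y) (psub X Y).

Lemma dot_ge0 v : 0 <= dot v v.
Proof. by rewrite /dot addr_ge0 // -expr2 sqr_ge0. Qed.

Lemma dist_sqr X Y : dist X Y ^+ 2 = dist2 X Y.
Proof. by rewrite sqr_sqrtr // dot_ge0. Qed.

Lemma dist2_eq0 X Y : dist2 X Y = 0 -> X = Y.
Proof.
case: X Y => [x1 x2] [y1 y2]; rewrite /dist2 /dot /= -!expr2 => /eqP.
rewrite paddr_eq0 ?sqr_ge0 // !sqrf_eq0 !subr_eq0.
by case/andP => /eqP -> /eqP ->.
Qed.

Lemma orth_cross_eq0 u v n : cross u v != 0 -> dot u n = 0 -> dot v n = 0 ->
  n = (0, 0).
Proof.
case: n => n1 n2 huv; rewrite /dot /= => hu hv.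
congr (_, _); apply: (mulIf huv); rewrite mul0r.
- transitivity (v.2 * (u.1 * n1 + u.2 * n2) - u.2 * (v.1 * n1 + v.2 * n2)).
    by rewrite /cross; ring.
  by rewrite hu hv !mulr0 subrr.
- transitivity (u.1 * (v.1 * n1 + v.2 * n2) - v.1 * (u.1 * n1 + u.2 * n2)).
    by rewrite /cross; ring.
  by rewrite hu hv !mulr0 subrr.
Qed.

Lemma dot_inj u v X Y : cross u v != 0 -> dot u X = dot u Y -> dot v X = dot v Y ->
  X = Y.
Proof.
move=> huv hu hv.
have dotB n : dot n (psub X Y) = dot n X - dot n Y by rewrite /dot /psub /=; ring.
have hu0 : dot u (psub X Y) = 0 by rewrite dotB hu subrr.
have hv0 : dot v (psub X Y) = 0 by rewrite dotB hv subrr.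
move: (orth_cross_eq0 huv hu0 hv0); case: X Y {hu hv dotB hu0 hv0} => [x1 x2] [y1 y2].
by rewrite /psub /= => -[/subr0_eq -> /subr0_eq ->].
Qed.

Lemma parallel_normals_eq n u X : cross n u = 0 -> dot n X = dot u X -> dot n X != 0 ->
  n = u.
Proof.
case: n u => [n1 n2] [u1 u2]; rewrite /cross /dot /= => hc hX h0.
congr (_, _); apply/subr0_eq; apply: (mulIf h0); rewrite mul0r.
- transitivity (n1 * (u1 * X.1 + u2 * X.2) - u1 * (n1 * X.1 + n2 * X.2)).
    by rewrite hX; ring.
  by rewrite -[RHS](mulr0 X.2) -hc; ring.
- transitivity (n2 * (u1 * X.1 + u2 * X.2) - u2 * (n1 * X.1 + n2 * X.2)).
    by rewrite hX; ring.
  by rewrite -[RHS](mulr0 (- X.1)) -hc; ring.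
Qed.

Lemma cross_cycle A B C :
  cross (psub C B) (psub A B) = cross (psub B A) (psub C A).
Proof. by rewrite /cross /psub /=; ring. Qed.

Lemma sides_normals_cross_neq0 h n u A B C : h != 0 ->
  dot n A = h -> dot n B = h -> dot u B = h -> dot u C = h ->
  cross (psub B A) (psub C A) != 0 -> cross n u != 0.
Proof.
move=> h0 nA nB uB uC hABC; apply/eqP => hnu.
have enu : n = u by apply: (parallel_normals_eq (X := B) hnu); rewrite ?nB ?uB.
have dotB X Y : dot (psub X Y) n = dot n X - dot n Y by rewrite /dot /psub /=; ring.
have hBA : dot (psub B A) n = 0 by rewrite dotB nB nA subrr.
have hCA : dot (psub C A) n = 0 by rewrite dotB enu uC -enu nA subrr.
by move: h0; rewrite -nA (orth_cross_eq0 hABC hBA hCA) /dot /= !mul0r addr0 eqxx.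
Qed.

Definition std_conic a b X := b * X.1 ^+ 2 + a ^+ 2 * X.2 ^+ 2 - a ^+ 2 * b.
Definition polar_normal a b T : pt R := (b * T.1, a ^+ 2 * T.2).
Definition on_polar a b T X := dot (polar_normal a b T) X = a ^+ 2 * b.

Lemma polar_normal_dot a b T s V :
  dot (polar_normal a b T) (padd T (pscale s V)) =
  a ^+ 2 * b + std_conic a b T + s * dot (polar_normal a b T) V.
Proof. by rewrite /dot /std_conic /padd /pscale /=; ring. Qed.

Lemma std_conic_shift a b T s V :
  std_conic a b (padd T (pscale s V)) = std_conic a b T +
    2 * s * dot (polar_normal a b T) V + s ^+ 2 * (b * V.1 ^+ 2 + a ^+ 2 * V.2 ^+ 2).
Proof. by rewrite /dot /std_conic /padd /pscale /=; ring. Qed.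

Lemma tangent_point a b k t0 P Q :
  (forall t, std_conic a b (padd P (pscale t (psub Q P))) = k * (t - t0) ^+ 2) ->
  exists T, [/\ std_conic a b T = 0, on_polar a b T P & on_polar a b T Q].
Proof.
move=> H; pose V := psub Q P; pose T := padd P (pscale t0 V).
have HT s : std_conic a b (padd T (pscale s V)) = k * s ^+ 2.
  have -> : padd T (pscale s V) = padd P (pscale (t0 + s) (psub Q P)).
    by rewrite /T /V /padd /pscale /=; congr (_, _); ring.
  by rewrite H addrAC subrr add0r.
set S := std_conic a b T; set L := dot (polar_normal a b T) V.
have hs s : S + 2 * s * L + s ^+ 2 * (b * V.1 ^+ 2 + a ^+ 2 * V.2 ^+ 2) = k * s ^+ 2.
  by rewrite -HT std_conic_shift.
have := hs 0; have := hs 1; have := hs (-1); rewrite sqrrN expr1n expr0n /=.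
move=> hm h1 h0.
have S0 : S = 0 by lra.
have L0 : L = 0 by lra.
have onT s : on_polar a b T (padd T (pscale s V)).
  by rewrite /on_polar polar_normal_dot -/S -/L S0 L0 mulr0 !addr0.
exists T; split => //.
- have -> : P = padd T (pscale (- t0) V).
    by rewrite [LHS]surjective_pairing /T /V /padd /pscale /=; congr (_, _); ring.
  exact: onT.
- have -> : Q = padd T (pscale (1 - t0) V).
    by rewrite [LHS]surjective_pairing /T /V /padd /pscale /psub /=; congr (_, _); ring.
  exact: onT.
Qed.

(* (s : w) is a homogeneous parameter on the ellipse, (1 : 0) giving (-a, 0);
   tangents_meet is the pole of the chord joining the points of parameters (s : w)
   and (s' : w'), and is the point itself when they coincide. *)
Definition param_form a b s w s' w' := a ^+ 2 * w * w' + b * s * s'.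

Definition tangents_meet a b s w s' w' : pt R :=
  (a * (a ^+ 2 * w * w' - b * s * s') / param_form a b s w s' w',
   a * b * (s * w' + s' * w) / param_form a b s w s' w').

Definition conic_pt a b s w := tangents_meet a b s w s w.

Lemma conic_pt_onto a b T : 0 < a -> 0 < b -> std_conic a b T = 0 ->
  exists s w, param_form a b s w s w != 0 /\ T = conic_pt a b s w.
Proof.
case: T => x y a0 b0 hT; have an : a != 0 by rewrite gt_eqF.
have bn : b != 0 by rewrite gt_eqF.
have [xa | xa] := eqVneq (x + a) 0.
  have ex : x = - a by rewrite -[x](addrK a) xa sub0r.
  have /eqP : a ^+ 2 * y ^+ 2 = 0 by rewrite -hT /std_conic ex /=; ring.
  rewrite mulf_eq0 !expf_eq0 (negbTE an) /= => /eqP ey.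
  exists 1, 0; rewrite /param_form mulr0 add0r !mulr1 bn; split => //.
  by rewrite /conic_pt /tangents_meet /param_form ex ey; congr (_, _); field.
exists (a ^+ 2 * y), (b * (x + a)).
have ed : param_form a b (a ^+ 2 * y) (b * (x + a)) (a ^+ 2 * y) (b * (x + a)) =
    2 * a ^+ 3 * b ^+ 2 * (x + a).
  transitivity (2 * a ^+ 3 * b ^+ 2 * (x + a) + a ^+ 2 * b * std_conic a b (x, y)).
    by rewrite /param_form /std_conic /=; ring.
  by rewrite hT mulr0 addr0.
have en : a ^+ 2 * (b * (x + a)) * (b * (x + a)) - b * (a ^+ 2 * y) * (a ^+ 2 * y) =
    2 * a ^+ 2 * b ^+ 2 * x * (x + a).
  transitivity (2 * a ^+ 2 * b ^+ 2 * x * (x + a) - a ^+ 2 * b * std_conic a b (x, y)).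
    by rewrite /std_conic /=; ring.
  by rewrite hT mulr0 subr0.
rewrite ed !mulf_neq0 ?expf_neq0 ?pnatr_eq0 //; split => //.
by rewrite /conic_pt /tangents_meet ed en; congr (_, _); field; rewrite xa bn an.
Qed.

Lemma param_formC a b s w s' w' : param_form a b s w s' w' = param_form a b s' w' s w.
Proof. by rewrite /param_form; ring. Qed.

Lemma tangents_meetC a b s w s' w' :
  tangents_meet a b s w s' w' = tangents_meet a b s' w' s w.
Proof. by rewrite /tangents_meet param_formC; congr (_ / _, _ / _); ring. Qed.

Lemma tangents_meet_polar a b s w s' w' :
  param_form a b s w s w != 0 -> param_form a b s w s' w' != 0 ->
  on_polar a b (conic_pt a b s w) (tangents_meet a b s w s' w').
Proof.
rewrite /on_polar /conic_pt /tangents_meet /dot /polar_normal /param_form /= => d d'.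
by field; rewrite d d'.
Qed.

Lemma polar_normals_cross a b s w s' w' :
  param_form a b s w s w != 0 -> param_form a b s' w' s' w' != 0 ->
  cross (polar_normal a b (conic_pt a b s w)) (polar_normal a b (conic_pt a b s' w')) =
  2 * a ^+ 4 * b ^+ 2 * (w * s' - s * w') * param_form a b s w s' w' /
    (param_form a b s w s w * param_form a b s' w' s' w').
Proof.
rewrite /cross /conic_pt /tangents_meet /polar_normal /param_form /= => d d'.
by field; rewrite d d'.
Qed.

Lemma polars_meet a b s w s' w' V :
  param_form a b s w s w != 0 -> param_form a b s' w' s' w' != 0 ->
  cross (polar_normal a b (conic_pt a b s w)) (polar_normal a b (conic_pt a b s' w')) != 0 ->
  on_polar a b (conic_pt a b s w) V -> on_polar a b (conic_pt a b s' w') V ->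
  param_form a b s w s' w' != 0 /\ V = tangents_meet a b s w s' w'.
Proof.
move=> d d' hc hV hV'.
have dd : param_form a b s w s' w' != 0.
  by apply: contraNneq hc; rewrite polar_normals_cross // => ->; rewrite mulr0 mul0r.
split=> //; apply: (dot_inj hc).
  by rewrite hV tangents_meet_polar.
by rewrite hV' tangents_meetC tangents_meet_polar // param_formC.
Qed.

Definition on_circle (o : pt R) k X := dot X X - 2 * dot o X + k = 0.

Lemma equidistant_chord O X Y : dist2 O X = dist2 O Y ->
  dot (psub Y X) O = (dot Y Y - dot X X) / 2.
Proof.
move=> h; transitivity ((dot Y Y - dot X X) / 2 + (dist2 O X - dist2 O Y) / 2).
  by rewrite /dist2 /dot /psub /=; field.
by rewrite h subrr mul0r addr0.
Qed.

Lemma circle_chord o k X Y : on_circle o k X -> on_circle o k Y ->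
  dot (psub Y X) o = (dot Y Y - dot X X) / 2.
Proof.
rewrite /on_circle => hX hY.
transitivity ((dot Y Y - dot X X) / 2 +
  ((dot X X - 2 * dot o X + k) - (dot Y Y - 2 * dot o Y + k)) / 2).
  by rewrite /dot /psub /=; field.
by rewrite hX hY subrr mul0r addr0.
Qed.

Lemma circumcenter_eq o k A B C O : cross (psub B A) (psub C A) != 0 ->
  on_circle o k A -> on_circle o k B -> on_circle o k C ->
  dist2 O A = dist2 O B -> dist2 O A = dist2 O C -> O = o.
Proof.
move=> hABC cA cB cC hB hC.
by apply: (dot_inj hABC); rewrite equidistant_chord // (circle_chord cA).
Qed.

Lemma on_circle_dist2 o k X : on_circle o k X -> dist2 o X = dot o o - k.
Proof.
move=> hX; transitivity (dot o o - k + (dot X X - 2 * dot o X + k)).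
  by rewrite /dist2 /dot /psub /=; ring.
by rewrite hX addr0.
Qed.

Lemma circumradius_gt0 A B C O : cross (psub B A) (psub C A) != 0 ->
  dist2 O A = dist2 O B -> dist2 O B = dist2 O C -> 0 < dist2 O A.
Proof.
move=> hABC hAB hBC; rewrite lt_def dot_ge0 andbT; apply: contraNneq hABC => hA.
have eA := dist2_eq0 hA; rewrite hAB in hA; have eB := dist2_eq0 hA.
rewrite hBC in hA; have eC := dist2_eq0 hA.
by rewrite -eA -eB -eC /cross /psub /= !subrr.
Qed.

(* Center and constant k of the circle |X|^2 - 2 o.X + k = 0 through the three poles,
   obtained by solving the linear system; e0..e3 are the elementary symmetric forms
   of the three parameters. *)
Definition tangents_circumcircle a b s1 w1 s2 w2 s3 w3 : pt R * R :=
  let e0 := w1 * w2 * w3 in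
  let e1 := s1 * w2 * w3 + w1 * s2 * w3 + w1 * w2 * s3 in
  let e2 := s1 * s2 * w3 + s1 * w2 * s3 + w1 * s2 * s3 in
  let e3 := s1 * s2 * s3 in
  let D := param_form a b s1 w1 s2 w2 * param_form a b s2 w2 s3 w3 *
           param_form a b s3 w3 s1 w1 in
  ((((4 * a ^+ 8 - a ^+ 6 * b) * e0 ^+ 2 - 2 * a ^+ 4 * b ^+ 2 * e0 * e2
       + a ^+ 4 * b ^+ 2 * e1 ^+ 2 + 2 * a ^+ 2 * b ^+ 3 * e1 * e3
       - a ^+ 2 * b ^+ 3 * e2 ^+ 2 + (b ^+ 4 - 4 * a ^+ 2 * b ^+ 3) * e3 ^+ 2)
      / (4 * a * D),
    a * b * (a ^+ 4 * e0 * e1 - (4 * a ^+ 4 - a ^+ 2 * b) * e0 * e3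
       + a ^+ 2 * b * e1 * e2 + b ^+ 2 * e2 * e3) / (2 * D)),
   ((2 * a ^+ 8 - a ^+ 6 * b) * e0 ^+ 2 - 2 * a ^+ 6 * b * e0 * e2
      + a ^+ 4 * b ^+ 2 * e1 ^+ 2 - 2 * a ^+ 4 * b ^+ 2 * e1 * e3
      + a ^+ 2 * b ^+ 3 * e2 ^+ 2 + (2 * a ^+ 2 * b ^+ 3 - b ^+ 4) * e3 ^+ 2)
     / (2 * D)).

Lemma tangents_circumcircle_cycle a b s1 w1 s2 w2 s3 w3 :
  tangents_circumcircle a b s2 w2 s3 w3 s1 w1 =
  tangents_circumcircle a b s1 w1 s2 w2 s3 w3.
Proof.
by rewrite /tangents_circumcircle /param_form; congr ((_ / _, _ / _), _ / _); ring.
Qed.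

Section TangentsCircumcircle.
Variables (a b s1 w1 s2 w2 s3 w3 : R).
Hypotheses (a_neq0 : a != 0) (d12 : param_form a b s1 w1 s2 w2 != 0)
  (d23 : param_form a b s2 w2 s3 w3 != 0) (d31 : param_form a b s3 w3 s1 w1 != 0).
Let o := (tangents_circumcircle a b s1 w1 s2 w2 s3 w3).1.
Let k := (tangents_circumcircle a b s1 w1 s2 w2 s3 w3).2.

Lemma tangents_circumcircle_vertex : on_circle o k (tangents_meet a b s1 w1 s2 w2).
Proof.
move: d12 d23 d31; rewrite /on_circle /o /k /tangents_circumcircle /tangents_meet.
by rewrite /dot /param_form /= => h12 h23 h31; field; rewrite a_neq0 h12 h23 h31.
Qed.

(* With c^2 = a^2 - b, the left side is the product of the powers of the foci
   (c, 0) and (-c, 0) with respect to the circle. *)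
Lemma tangents_circumcircle_foci :
  (k + a ^+ 2 - b) ^+ 2 - 4 * o.1 ^+ 2 * (a ^+ 2 - b) = 4 * (dot o o - k) * b.
Proof.
move: d12 d23 d31; rewrite /o /k /tangents_circumcircle /dot /param_form /=.
by move=> h12 h23 h31; field; rewrite a_neq0 h12 h23 h31.
Qed.

End TangentsCircumcircle.

Lemma std_circumcircle_foci a b c A B C O T1 T2 T3 :
  0 < a -> 0 < b -> c ^+ 2 = a ^+ 2 - b ->
  std_conic a b T1 = 0 -> std_conic a b T2 = 0 -> std_conic a b T3 = 0 ->
  on_polar a b T1 A -> on_polar a b T1 B -> on_polar a b T2 B -> on_polar a b T2 C ->
  on_polar a b T3 C -> on_polar a b T3 A ->
  cross (psub B A) (psub C A) != 0 ->
  dist2 O A = dist2 O B -> dist2 O B = dist2 O C ->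
  (dist2 O A - dist2 O (c, 0)) * (dist2 O A - dist2 O (- c, 0)) = 4 * dist2 O A * b.
Proof.
move=> a0 b0 hc.
move=> /(conic_pt_onto a0 b0) [s1 [w1 [d1 ->]]].
move=> /(conic_pt_onto a0 b0) [s2 [w2 [d2 ->]]].
move=> /(conic_pt_onto a0 b0) [s3 [w3 [d3 ->]]].
move=> h1A h1B h2B h2C h3C h3A hABC hAB hBC.
have hab : a ^+ 2 * b != 0 by rewrite mulf_neq0 ?expf_neq0 ?gt_eqF.
have n12 := sides_normals_cross_neq0 hab h1A h1B h2B h2C hABC.
have hBCA : cross (psub C B) (psub A B) != 0 by rewrite cross_cycle.
have hCAB : cross (psub A C) (psub B C) != 0 by rewrite 2!cross_cycle.
have n23 := sides_normals_cross_neq0 hab h2B h2C h3C h3A hBCA.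
have n31 := sides_normals_cross_neq0 hab h3C h3A h1A h1B hCAB.
have [d12 eB] := polars_meet d1 d2 n12 h1B h2B.
have [d23 eC] := polars_meet d2 d3 n23 h2C h3C.
have [d31 eA] := polars_meet d3 d1 n31 h3A h1A.
have an : a != 0 by rewrite gt_eqF.
pose ok := tangents_circumcircle a b s1 w1 s2 w2 s3 w3.
have cA : on_circle ok.1 ok.2 A.
  by rewrite eA /ok -2!tangents_circumcircle_cycle; apply: tangents_circumcircle_vertex.
have cB : on_circle ok.1 ok.2 B by rewrite eB; apply: tangents_circumcircle_vertex.
have cC : on_circle ok.1 ok.2 C.
  by rewrite eC /ok -tangents_circumcircle_cycle; apply: tangents_circumcircle_vertex.
rewrite (circumcenter_eq hABC cA cB cC hAB (etrans hAB hBC)) (on_circle_dist2 cA).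
rewrite -(tangents_circumcircle_foci an d12 d23 d31) -/ok.
have -> : b = a ^+ 2 - c ^+ 2 by rewrite hc; ring.
by clearbody ok; case: ok {cA cB cC} => o k; rewrite /dist2 /dot /psub /=; ring.
Qed.

Definition rot u X : pt R := (dot u X, cross u X).
Definition midpoint P Q : pt R := pscale (1 / 2) (padd P Q).
Definition frame u P X := rot u (psub X P).

Lemma rot_dot u X Y : dot (rot u X) (rot u Y) = dot u u * dot X Y.
Proof. by rewrite /rot /dot /cross /=; ring. Qed.

Lemma rot_cross u X Y : cross (rot u X) (rot u Y) = dot u u * cross X Y.
Proof. by rewrite /rot /dot /cross /=; ring. Qed.

Lemma rot_scale_self u t : dot u u = 1 -> rot u (pscale t u) = (t, 0).
Proof.
move=> unit_u; rewrite /rot /cross /pscale /=; congr (_, _); last by ring.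
by transitivity (t * dot u u); [rewrite /dot /=; ring | rewrite unit_u mulr1].
Qed.

Lemma frame_sub u M X Y : psub (frame u M X) (frame u M Y) = rot u (psub X Y).
Proof. by rewrite /frame /rot /dot /cross /psub /=; congr (_, _); ring. Qed.

Lemma frame_line u M P Q t :
  frame u M (padd P (pscale t (psub Q P))) =
  padd (frame u M P) (pscale t (psub (frame u M Q) (frame u M P))).
Proof. by rewrite /frame /rot /dot /cross /padd /pscale /psub /=; congr (_, _); ring. Qed.

Lemma frame_dist2 u M X Y : dot u u = 1 ->
  dist2 (frame u M X) (frame u M Y) = dist2 X Y.
Proof. by move=> unit_u; rewrite /dist2 frame_sub rot_dot unit_u mul1r. Qed.

Lemma frame_cross u M A B C : dot u u = 1 ->
  cross (psub (frame u M B) (frame u M A)) (psub (frame u M C) (frame u M A)) =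
  cross (psub B A) (psub C A).
Proof. by move=> unit_u; rewrite !frame_sub rot_cross unit_u mul1r. Qed.

Lemma focal_frame F1 F2 :
  exists u, dot u u = 1 /\ pscale (1 / 2) (psub F1 F2) = pscale (dist F1 F2 / 2) u.
Proof.
have := dist_sqr F1 F2; rewrite /dist2; set d := dist F1 F2 => hd.
have [d0 | dn] := eqVneq d 0.
  exists (1, 0); split; first by rewrite /dot /=; ring.
  move: hd; rewrite d0 expr0n /= => /esym/(dist2_eq0 (X := F1)) ->.
  by rewrite /psub /pscale /=; congr (_, _); ring.
exists (pscale (1 / d) (psub F1 F2)); split.
  transitivity (dot (psub F1 F2) (psub F1 F2) / d ^+ 2).
    by rewrite /dot /pscale /=; field.
  by rewrite -hd divff // expf_neq0.
by rewrite /pscale /=; congr (_, _); field.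
Qed.

Section FocalFrame.
Variables (F1 F2 u : pt R) (a c : R).
Hypotheses (unit_u : dot u u = 1) (focal_u : pscale (1 / 2) (psub F1 F2) = pscale c u).
Local Notation phi := (frame u (midpoint F1 F2)).

Lemma frame_focus1 : phi F1 = (c, 0).
Proof.
rewrite /frame (_ : psub F1 _ = pscale c u) ?rot_scale_self //.
by rewrite -focal_u /midpoint /psub /padd /pscale /=; congr (_, _); field.
Qed.

Lemma frame_focus2 : phi F2 = (- c, 0).
Proof.
rewrite /frame (_ : psub F2 _ = pscale (- c) u) ?rot_scale_self //.
transitivity (pscale (- 1) (pscale (1 / 2) (psub F1 F2))).
  by rewrite /midpoint /psub /padd /pscale /=; congr (_, _); field.
by rewrite focal_u /pscale /=; congr (_, _); ring.
Qed.

Lemma conic_eq_frame X : conic_eq F1 F2 a X = std_conic a (a ^+ 2 - c ^+ 2) (phi X).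
Proof.
rewrite /conic_eq /= focal_u -/(midpoint F1 F2) /frame.
set x := psub X _.
transitivity (std_conic a (a ^+ 2 - c ^+ 2) (rot u x) +
  (dot u u - 1) * (a ^+ 2 * c ^+ 2 - a ^+ 2 * dot x x)).
  by rewrite /std_conic /rot /dot /cross /pscale /=; ring.
by rewrite unit_u subrr mul0r addr0.
Qed.

Lemma frame_tangent P Q : tangent_line F1 F2 a P (psub Q P) ->
  exists T, [/\ std_conic a (a ^+ 2 - c ^+ 2) T = 0,
    on_polar a (a ^+ 2 - c ^+ 2) T (phi P) & on_polar a (a ^+ 2 - c ^+ 2) T (phi Q)].
Proof.
case=> _ [t0 [k [_ hk]]]; apply: (@tangent_point _ _ k t0) => t.
by rewrite -frame_line -conic_eq_frame hk.
Qed.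

End FocalFrame.

Lemma power_product_nonpos d1 d2 b : 0 <= d1 -> 0 <= d2 -> 0 < d1 * d2 ->
  (d1 * d2 - d1 ^+ 2) * (d1 * d2 - d2 ^+ 2) = 4 * (d1 * d2) * b -> b <= 0.
Proof.
move=> d10 d20 hd h.
have : 4 * (d1 * d2) * b <= 0.
  rewrite -h (_ : _ * _ = - (d1 * d2 * (d1 - d2) ^+ 2)); last by ring.
  by rewrite oppr_le0 mulr_ge0 ?sqr_ge0 ?ltW.
by rewrite pmulr_rle0 // mulr_gt0.
Qed.

End Plane.

Theorem proposition2p5 (R : realType) (A B C O F1 F2 : pt R) (a : R) :
  central_conic F1 F2 a ->
  nondegenerate_triangle A B C ->
  circumscribed A B C F1 F2 a ->
  is_circumcenter A B C O ->
  (dist O A) ^+ 2 = dist O F1 * dist O F2 ->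
  is_hyperbola F1 F2 a.
Proof.
move=> [a0 hne] hABC [hAB hBC hCA] [hOAB hOBC] hR; split; first by split.
rewrite ltNge; apply/negP => hle.
have [u [unit_u focal_u]] := focal_frame F1 F2.
set c := dist F1 F2 / 2 in focal_u; set phi := frame u (midpoint F1 F2).
have b0 : 0 < a ^+ 2 - c ^+ 2.
  have c0 : 0 <= c by rewrite divr_ge0 // sqrtr_ge0.
  have ca : c < a by rewrite ltr_pdivrMr // mulrC lt_neqAle eq_sym hne hle.
  nra.
have [T1 [e1 p1A p1B]] := frame_tangent unit_u focal_u hAB.
have [T2 [e2 p2B p2C]] := frame_tangent unit_u focal_u hBC.
have [T3 [e3 p3C p3A]] := frame_tangent unit_u focal_u hCA.
have equi X Y : dist O X = dist O Y -> dist2 O X = dist2 O Y by rewrite -!dist_sqr => ->.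
have equi_phi X Y : dist O X = dist O Y -> dist2 (phi O) (phi X) = dist2 (phi O) (phi Y).
  by rewrite !frame_dist2 //; apply: equi.
have R0 : 0 < dist O F1 * dist O F2.
  by rewrite -hR dist_sqr (circumradius_gt0 hABC (equi _ _ hOAB) (equi _ _ hOBC)).
have hc : c ^+ 2 = a ^+ 2 - (a ^+ 2 - c ^+ 2) by ring.
rewrite /nondegenerate_triangle -(frame_cross (midpoint F1 F2) A B C unit_u) in hABC.
have := std_circumcircle_foci a0 b0 hc e1 e2 e3 p1A p1B p2B p2C p3C p3A hABC
  (equi_phi _ _ hOAB) (equi_phi _ _ hOBC).
rewrite -(frame_focus1 unit_u focal_u) -(frame_focus2 unit_u focal_u) !frame_dist2 //.
rewrite -!dist_sqr hR => /(power_product_nonpos (sqrtr_ge0 _) (sqrtr_ge0 _) R0).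
by rewrite leNgt b0.
Qed.
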